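(* Let $G$ be a graph on $n$ vertices and $A\in\mathcal{S}(G)$ a matrix with the SAP and $\operatorname{rank}(A)=r$. Then for every integer $r'$ with $r\le r'\le n$ there is a matrix $A'\in\mathcal{S}(G)$ with the SAP and $\operatorname{rank}(A')=r'$.
   Context: For a graph $G$ on vertex set $\{1,\ldots,n\}$, $\mathcal{S}(G)$ is the set of real symmetric $n\times n$ matrices whose $(i,j)$-entry for $i\neq j$ is nonzero if and only if $\{i,j\}$ is an edge (diagonal entries arbitrary). $\circ$ is the entrywise product. A symmetric matrix $A$ has the strong Arnol'd property (SAP) if $X=O$ is the only real symmetric matrix with $A\circ X=O$, $I\circ X=O$, $AX=O$. *)

From mathcomp Require Import all_boot all_order all_algebra.
From mathcomp Require Import reals.
Set Implicit Arguments. Unset Strict Implicit. Unset Printing Implicit Defensive.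
Import GRing.Theory Num.Theory.
Local Open Scope ring_scope.

Definition simple_graph (n : nat) (G : rel 'I_n) : Prop :=
  (forall i j, G i j = G j i) /\ (forall i, G i i = false).

Definition SG (R : realType) (n : nat) (G : rel 'I_n) (A : 'M[R]_n) : Prop :=
  A^T = A /\ (forall i j : 'I_n, i != j -> (A i j != 0) = G i j).

Definition SAP (R : realType) (n : nat) (A : 'M[R]_n) : Prop :=
  forall X : 'M[R]_n,
    X^T = X ->
    map2_mx *%R A X = 0 ->
    map2_mx *%R (1%:M : 'M[R]_n) X = 0 ->
    A *m X = 0 ->
    X = 0.

From mathcomp Require Import all_boot all_order all_algebra.
From mathcomp Require Import reals.
Set Implicit Arguments. Unset Strict Implicit. Unset Printing Implicit Defensive.
Import GRing.Theory Num.Theory.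
Local Open Scope ring_scope.

(* If rank A < n, pick u != 0 with u A = 0 and a coordinate i with u_i != 0,
   and put A' := A + E_ii.  Only a diagonal entry changes, so A' is in S(G).
   From u A' X = u_i X_(i,-) one gets that A' X = 0 forces row i of X to
   vanish, so A X = A' X = 0 and the SAP of A transfers to A'.  Finally
   A = (I - u_i^-1 e_i u) A', so the row space of A is contained in that of
   A', strictly because A' u^T = u_i e_i != 0 = A u^T; as a rank-one
   perturbation, A' therefore has rank exactly rank A + 1.  Iterate. *)

Lemma delta_mx_is_diag (R : pzRingType) n (i : 'I_n) :
  is_diag_mx (delta_mx i i : 'M[R]_n).
Proof.
apply/is_diag_mxP => j k jk; rewrite mxE.
by case: eqP => [ji|] //; case: eqP => [ki|] //; move: jk; rewrite ji ki eqxx.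
Qed.

Section RankOnePerturbation.

Variable F : fieldType.

Lemma left_kernel_neq0 m n (A : 'M[F]_(m, n)) :
  (\rank A < m)%N -> exists2 u : 'rV_m, u *m A = 0 & u != 0.
Proof.
move=> rkA; have : kermx A != 0.
  by rewrite kermx_eq0 /row_free neq_ltn rkA.
by case/rowV0Pn=> u /sub_kermxP uA u_neq0; exists u.
Qed.

Lemma rV_coord_neq0 n (u : 'rV[F]_n) : u != 0 -> exists i, u 0 i != 0.
Proof.
move=> u_neq0; apply/existsP; apply: contraR u_neq0 => /existsPn u0.
by apply/eqP/rowP => j; rewrite mxE; apply/eqP/negPn/u0.
Qed.

Lemma mul_rV_delta m n (u : 'rV[F]_m) (i : 'I_m) (j : 'I_n) :
  u *m delta_mx i j = u 0 i *: delta_mx 0 j.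
Proof.
apply/rowP => k; rewrite !mxE (bigD1 i) //= big1 ?addr0 => [|l /negbTE li].
  by rewrite !mxE eqxx /=; case: (k == j); rewrite ?mulr1 ?mulr0.
by rewrite mxE li mulr0.
Qed.

Lemma mul_delta_cV m n (v : 'cV[F]_n) (i : 'I_m) (j : 'I_n) :
  delta_mx i j *m v = v j 0 *: delta_mx i 0.
Proof.
apply/trmx_inj; rewrite trmx_mul !linearZ /= !trmx_delta mul_rV_delta.
by rewrite mxE.
Qed.

Lemma mxrank_add_delta m n (A : 'M[F]_(m, n)) (u : 'rV_m) (v : 'cV_n) i j :
  u *m A = 0 -> A *m v = 0 -> u 0 i != 0 -> v j 0 != 0 ->
  \rank (A + delta_mx i j)%R = (\rank A).+1.
Proof.
move=> uA Av ui vj; set B := A + delta_mx i j.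
have uB : u *m B = u 0 i *: delta_mx 0 j.
  by rewrite mulmxDr uA add0r mul_rV_delta.
have Bv : B *m v = v j 0 *: delta_mx i 0.
  by rewrite mulmxDl Av add0r mul_delta_cV.
apply/eqP; rewrite eqn_leq; apply/andP; split.
  by apply: leq_trans (mxrank_add _ _) _; rewrite mxrank_delta addn1.
apply: rank_ltmx; rewrite ltmxE; apply/andP; split.
  set W := (u 0 i)^-1 *: delta_mx i 0 *m u.
  have WB : W *m B = delta_mx i j.
    rewrite -mulmxA uB -scalemxAl -scalemxAr scalerA mulVf //.
    by rewrite scale1r mul_delta_mx.
  have -> : A = (1%:M - W) *m B by rewrite mulmxBl mul1mx WB addrK.
  exact: submxMl.
apply/negP => /submxP [W BWA].
move/eqP: Bv; rewrite BWA -mulmxA Av mulmx0 eq_sym scaler_eq0 (negbTE vj) /=.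
by apply/negP; rewrite -mxrank_eq0 mxrank_delta.
Qed.

End RankOnePerturbation.

Lemma SG_add_diag (R : realType) n (G : rel 'I_n) (A D : 'M[R]_n) :
  SG G A -> is_diag_mx D -> SG G (A + D).
Proof.
move=> [AT Aoff] /is_diag_mxP D0; split.
  rewrite linearD /= AT; congr (_ + _); apply/matrixP => j k; rewrite mxE.
  by have [->|jk] := eqVneq j k; rewrite // !D0 // eq_sym.
by move=> j k jk; rewrite mxE D0 ?addr0 ?Aoff.
Qed.

Lemma SAP_add_delta (R : realType) n (A : 'M[R]_n) (u : 'rV_n) i :
  SAP A -> u *m A = 0 -> u 0 i != 0 -> SAP (A + delta_mx i i).
Proof.
move=> sapA uA ui X XT hadX diagX mulX.
have rowX : (delta_mx 0 i : 'rV_n) *m X = 0.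
  apply/eqP; move/(congr1 (mulmx u))/eqP: mulX.
  rewrite mulmx0 mulmxA mulmxDr uA add0r mul_rV_delta -scalemxAl.
  by rewrite scaler_eq0 (negbTE ui).
have DX : delta_mx i i *m X = 0.
  by rewrite -(mul_delta_mx (0 : 'I_1)) -mulmxA rowX mulmx0.
apply: sapA => //; last by move: mulX; rewrite mulmxDl DX addr0.
apply/matrixP => j k; move/matrixP: hadX => /(_ j k).
have [<-|jk] := eqVneq j k.
  move/matrixP: diagX => /(_ j j); rewrite !mxE eqxx mul1r => ->.
  by rewrite !mulr0.
have /is_diag_mxP/(_ j k jk) Djk := @delta_mx_is_diag R n i.
by rewrite !mxE in Djk *; rewrite Djk addr0.
Qed.

Lemma SG_SAP_rank_succ (R : realType) n (G : rel 'I_n) (A : 'M[R]_n) :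
  SG G A -> SAP A -> (\rank A < n)%N ->
  exists A' : 'M[R]_n, [/\ SG G A', SAP A' & \rank A' = (\rank A).+1].
Proof.
move=> sgA sapA rkA; have [AT _] := sgA.
have [u uA u_neq0] := left_kernel_neq0 rkA.
have [i ui] := rV_coord_neq0 u_neq0.
have AuT : A *m u^T = 0 by rewrite -AT -trmx_mul uA trmx0.
exists (A + delta_mx i i); split.
- exact: SG_add_diag sgA (@delta_mx_is_diag R n i).
- exact: SAP_add_delta sapA uA ui.
- by apply: (mxrank_add_delta uA AuT ui); rewrite mxE.
Qed.

Theorem corollary3p6 (R : realType) (n : nat) (G : rel 'I_n)
    (A : 'M[R]_n) (r' : nat) :
  simple_graph G -> SG G A -> SAP A ->
  (\rank A <= r' <= n)%N ->
  exists A' : 'M[R]_n, [/\ SG G A', SAP A' & \rank A' = r'].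
Proof.
move=> _ sgA sapA /andP [rkA_le r'_le].
rewrite -(subnKC rkA_le) in r'_le *; move: (r' - \rank A)%N r'_le => d.
elim: d A sgA sapA {rkA_le} => [|d IHd] A sgA sapA rk_le.
  by exists A; rewrite addn0.
have rkA : (\rank A < n)%N.
  by apply: leq_trans rk_le; rewrite addnS ltnS leq_addr.
have [A1 [sgA1 sapA1 rkA1]] := SG_SAP_rank_succ sgA sapA rkA.
have [|A2 [sgA2 sapA2 rkA2]] := IHd A1 sgA1 sapA1.
  by rewrite rkA1 addSn -addnS.
by exists A2; rewrite rkA2 rkA1 addSnnS.
Qed.
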